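(* For $s,L$ large enough, the deterministic subset $\Xi=[-s,s]\cap\mathbb{Z}_L$ is typically $s$-sparse and is $s/16$-cosine generic.
   Context: $\mathbb{Z}_L=\{\lfloor-(L-1)/2\rfloor,\dots,\lfloor(L-1)/2\rfloor\}$. A (possibly deterministic) random subset $\Xi\subset\mathbb{Z}_L$ is typically $s$-sparse if for some fixed constants $\alpha,\beta>0$ we have $\alpha s\le|\Xi|\le\beta s$ with probability $1-o_L(1)$. With $\mathcal{V}(\Xi,a)=\mathbf{1}_{\{0\in\Xi\}}+2\sum_{k\in\Xi\setminus\{0\}}\cos^2(2\pi ak/L)$, $\Xi$ is $\Gamma$-cosine generic if with probability $1-o_L(1)$, $\min_{a\in\mathbb{Z}_L}\mathcal{V}(\Xi,a)\ge\Gamma(1-o_L(1))$. *)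

From Stdlib Require Import Reals ZArith List.
Import ListNotations.
Open Scope R_scope.

(* Z_L = { floor(-(L-1)/2), ..., floor((L-1)/2) } as a duplicate-free list of
   integers (Z.div is floor division). Has exactly L elements for L >= 1. *)
Definition ZL (L : nat) : list Z :=
  let lo := Z.div (- (Z.of_nat L - 1)) 2 in
  let hi := Z.div (Z.of_nat L - 1) 2 in
  map (fun i => (lo + Z.of_nat i)%Z) (seq 0 (Z.to_nat (hi - lo + 1))).

Definition Xi_box (L s : nat) : list Z :=
  filter (fun k => Z.leb (Z.abs k) (Z.of_nat s)) (ZL L).

(* V(Xi, a) = 1_{0 ∈ Xi} + 2 * sum_{k ∈ Xi \ {0}} cos^2(2 pi a k / L)
   (Xi is a duplicate-free list, so the sum is over the set) *)
Definition cosV (L : nat) (Xi : list Z) (a : Z) : R :=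
  (if existsb (Z.eqb 0) Xi then 1 else 0) +
  2 * fold_right Rplus 0
        (map (fun k => (cos (2 * PI * IZR a * IZR k / INR L)) ^ 2)
             (filter (fun k => negb (Z.eqb k 0)) Xi)).

Definition eventually_L (P : nat -> Prop) : Prop :=
  exists N : nat, forall L : nat, (N <= L)%nat -> P L.

(* A deterministic family (Xi_L)_L is typically s-sparse: for some fixed
   alpha, beta > 0, alpha s <= |Xi_L| <= beta s with probability 1 - o_L(1);
   for a deterministic set this means: for all L large enough. *)
Definition det_typically_sparse (Xi : nat -> list Z) (s : nat -> nat) : Prop :=
  exists alpha beta : R, 0 < alpha /\ 0 < beta /\
    eventually_L (fun L =>
      alpha * INR (s L) <= INR (length (Xi L)) <= beta * INR (s L)).

(* Gamma-cosine generic: with probability 1 - o_L(1),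
   min_{a in Z_L} V(Xi_L, a) >= Gamma (1 - o_L(1)); deterministic version. *)
Definition det_cosine_generic (Xi : nat -> list Z) (Gamma : nat -> R) : Prop :=
  exists eps : nat -> R, Un_cv eps 0 /\
    eventually_L (fun L =>
      forall a : Z, In a (ZL L) -> Gamma L * (1 - eps L) <= cosV L (Xi L) a).

From Stdlib Require Import Reals ZArith List Lia Lra FinFun.
Import ListNotations.
Open Scope R_scope.

(* The box contains the run 1, ..., n with n = min(s, (L-1)/2) >= s/4, and lies in
   [-s, s], which gives the sparsity bounds.  For the cosine sum, put u = cos^2 t:
   then cos^2 t + cos^2 (2t) = u + (2u - 1)^2 = 4 (u - 3/8)^2 + 7/16 >= 7/16.  Summing
   this over the pairs (k, 2k), 1 <= k <= m, counts every term of the run 1, ..., 2m at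
   most twice, so that run contributes at least 7m/32, and V >= 7/16 * (n/2) >= s/16
   once s >= 10. *)

Definition sumR {A : Type} (g : A -> R) (l : list A) : R := fold_right Rplus 0 (map g l).

Section SumR.
Context {A : Type}.

Lemma sumR_nil (g : A -> R) : sumR g [] = 0.
Proof. reflexivity. Qed.

Lemma sumR_cons (g : A -> R) x l : sumR g (x :: l) = g x + sumR g l.
Proof. reflexivity. Qed.

Lemma sumR_app (g : A -> R) l1 l2 : sumR g (l1 ++ l2) = sumR g l1 + sumR g l2.
Proof.
  induction l1 as [|x l1 IH]; simpl app.
  - rewrite sumR_nil; ring.
  - rewrite !sumR_cons, IH; ring.
Qed.

Lemma sumR_map {B : Type} (g : B -> R) (f : A -> B) l :
  sumR g (map f l) = sumR (fun x => g (f x)) l.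
Proof. unfold sumR; now rewrite map_map. Qed.

Lemma sumR_plus (f g : A -> R) l :
  sumR (fun x => f x + g x) l = sumR f l + sumR g l.
Proof.
  induction l as [|x l IH]; rewrite ?sumR_nil, ?sumR_cons; [ring | rewrite IH; ring].
Qed.

Lemma sumR_const (c : R) (l : list A) : sumR (fun _ => c) l = c * INR (length l).
Proof.
  induction l as [|x l IH]; rewrite ?sumR_nil, ?sumR_cons; simpl length.
  - simpl; ring.
  - rewrite IH, S_INR; ring.
Qed.

Lemma sumR_le (f g : A -> R) l : (forall x, f x <= g x) -> sumR f l <= sumR g l.
Proof.
  intros Hfg; induction l as [|x l IH]; rewrite ?sumR_nil, ?sumR_cons.
  - lra.
  - specialize (Hfg x); lra.
Qed.

Lemma sumR_nonneg (g : A -> R) l : (forall x, 0 <= g x) -> 0 <= sumR g l.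
Proof.
  intros Hg; apply Rle_trans with (sumR (fun _ => 0) l).
  - rewrite sumR_const; lra.
  - now apply sumR_le.
Qed.

Lemma sumR_infix_le (g : A -> R) l1 l l2 :
  (forall x, 0 <= g x) -> sumR g l <= sumR g (l1 ++ l ++ l2).
Proof.
  intros Hg; rewrite !sumR_app.
  pose proof (sumR_nonneg g l1 Hg); pose proof (sumR_nonneg g l2 Hg); lra.
Qed.

End SumR.

Section DoublingPairs.
Variable F : nat -> R.
Hypothesis F_nonneg : forall j, 0 <= F j.

Lemma sumR_seq_prefix_le k m n : (m <= n)%nat -> sumR F (seq k m) <= sumR F (seq k n).
Proof.
  intros Hmn; replace n with (m + (n - m))%nat by lia.
  rewrite seq_app, <- (app_nil_r (_ ++ _)), <- app_assoc.
  exact (sumR_infix_le F [] _ _ F_nonneg).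
Qed.

Lemma sumR_seq_double_le n :
  sumR (fun k => F (2 * k)%nat) (seq 1 n) <= sumR F (seq 1 (2 * n)).
Proof.
  induction n as [|n IH]; [apply Rle_refl|].
  replace (2 * S n)%nat with (S (S (2 * n))) by lia.
  rewrite !seq_S, <- app_assoc, !sumR_app, !sumR_cons, !sumR_nil.
  replace (1 + S (2 * n))%nat with (2 * (1 + n))%nat by lia.
  pose proof (F_nonneg (1 + 2 * n)); lra.
Qed.

Lemma sumR_seq_pairs_ge (c : R) m :
  (forall k, (1 <= k)%nat -> c <= F k + F (2 * k)) ->
  c * INR m / 2 <= sumR F (seq 1 (2 * m)).
Proof.
  intros Hpair.
  assert (Hsum : c * INR m <= sumR F (seq 1 m) + sumR (fun k => F (2 * k)%nat) (seq 1 m)).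
  { replace (c * INR m) with (sumR (fun _ => c) (seq 1 m))
      by now rewrite sumR_const, length_seq.
    rewrite <- sumR_plus, <- seq_shift, !sumR_map.
    apply sumR_le; intros k; apply Hpair; lia. }
  pose proof (sumR_seq_prefix_le 1 m (2 * m) ltac:(lia)).
  pose proof (sumR_seq_double_le m); lra.
Qed.

End DoublingPairs.

Lemma cos_sq_add_cos_double_sq (t : R) : 7/16 <= cos t ^ 2 + cos (2 * t) ^ 2.
Proof.
  rewrite cos_2a_cos.
  pose proof (pow2_ge_0 (cos t ^ 2 - 3/8)); nra.
Qed.

Lemma sumR_cos_sq_seq_ge (x : R) m :
  7/32 * INR m <= sumR (fun j => cos (x * INR j) ^ 2) (seq 1 (2 * m)).
Proof.
  replace (7/32 * INR m) with (7/16 * INR m / 2) by field.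
  apply sumR_seq_pairs_ge; [intros; apply pow2_ge_0 |].
  intros k _; rewrite mult_INR.
  replace (x * (INR 2 * INR k)) with (2 * (x * INR k)) by (simpl; ring).
  apply cos_sq_add_cos_double_sq.
Qed.

Definition Zrange (lo : Z) (n : nat) : list Z :=
  map (fun i => (lo + Z.of_nat i)%Z) (seq 0 n).

Lemma Zrange_S lo n : Zrange lo (S n) = Zrange lo n ++ [(lo + Z.of_nat n)%Z].
Proof. unfold Zrange; now rewrite seq_S, map_app. Qed.

Lemma Zrange_add lo m n : Zrange lo (m + n) = Zrange lo m ++ Zrange (lo + Z.of_nat m) n.
Proof.
  induction n as [|n IH].
  - now rewrite Nat.add_0_r, app_nil_r.
  - rewrite Nat.add_succ_r, !Zrange_S, IH, <- app_assoc.
    do 3 f_equal; lia.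
Qed.

Lemma Zrange_1 n : Zrange 1 n = map Z.of_nat (seq 1 n).
Proof. unfold Zrange; rewrite <- seq_shift, map_map; apply map_ext; lia. Qed.

Lemma NoDup_Zrange lo n : NoDup (Zrange lo n).
Proof. apply Injective_map_NoDup; [intros i j; lia | apply seq_NoDup]. Qed.

Lemma ZL_split L n :
  (2 * n + 1 <= L)%nat -> exists l1 l2, ZL L = l1 ++ map Z.of_nat (seq 1 n) ++ l2.
Proof.
  intros HnL; unfold ZL; cbv zeta.
  set (lo := (- (Z.of_nat L - 1) / 2)%Z); set (hi := ((Z.of_nat L - 1) / 2)%Z).
  assert (Hlohi : (lo <= 0 /\ Z.of_nat n <= hi)%Z) by (unfold lo, hi; Z.div_mod_to_equations; lia).
  change (map _ (seq 0 ?N)) with (Zrange lo N).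
  replace (Z.to_nat (hi - lo + 1)) with (Z.to_nat (1 - lo) + (n + Z.to_nat (hi - Z.of_nat n)))%nat by lia.
  rewrite !Zrange_add.
  replace (lo + Z.of_nat (Z.to_nat (1 - lo)))%Z with 1%Z by lia.
  rewrite Zrange_1; eauto.
Qed.

Lemma Xi_box_split L s n :
  (2 * n + 1 <= L)%nat -> (n <= s)%nat ->
  exists l1 l2, Xi_box L s = l1 ++ map Z.of_nat (seq 1 n) ++ l2.
Proof.
  intros HnL Hns; destruct (ZL_split L n HnL) as (l1 & l2 & E).
  unfold Xi_box; rewrite E, !filter_app, (forallb_filter_id _ (map Z.of_nat _)); [eauto |].
  apply forallb_forall; intros k Hk.
  apply in_map_iff in Hk as (j & <- & Hj); apply in_seq in Hj.
  apply Z.leb_le; lia.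
Qed.

Lemma Xi_box_length_le L s : (length (Xi_box L s) <= 2 * s + 1)%nat.
Proof.
  replace (2 * s + 1)%nat with (length (Zrange (- Z.of_nat s) (2 * s + 1)))
    by (unfold Zrange; now rewrite length_map, length_seq).
  apply NoDup_incl_length.
  - apply NoDup_filter, NoDup_Zrange.
  - intros k Hk; apply filter_In in Hk as [_ Hk]; apply Z.leb_le in Hk.
    apply in_map_iff; exists (Z.to_nat (k + Z.of_nat s)); split; [lia | apply in_seq; lia].
Qed.

Lemma cosV_Xi_box_ge L s n a :
  (2 * n + 1 <= L)%nat -> (n <= s)%nat ->
  2 * sumR (fun j => cos (2 * PI * IZR a / INR L * INR j) ^ 2) (seq 1 n)
    <= cosV L (Xi_box L s) a.
Proof.
  intros HnL Hns; destruct (Xi_box_split L s n HnL Hns) as (l1 & l2 & E).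
  unfold cosV; rewrite E, !filter_app, (forallb_filter_id _ (map _ _)).
  2:{ apply forallb_forall; intros k Hk.
      apply in_map_iff in Hk as (j & <- & Hj); apply in_seq in Hj.
      apply Bool.negb_true_iff, Z.eqb_neq; lia. }
  set (g := fun k => cos (2 * PI * IZR a * IZR k / INR L) ^ 2).
  change (fold_right Rplus 0 (map g ?l)) with (sumR g l).
  pose proof (sumR_infix_le g (filter (fun k => negb (k =? 0)%Z) l1) (map Z.of_nat (seq 1 n))
                (filter (fun k => negb (k =? 0)%Z) l2) (fun k => pow2_ge_0 _)) as Hinfix.
  rewrite sumR_map in Hinfix.
  replace (sumR (fun j => g (Z.of_nat j)) (seq 1 n))
    with (sumR (fun j => cos (2 * PI * IZR a / INR L * INR j) ^ 2) (seq 1 n)) in Hinfix.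
  2:{ unfold sumR, g; f_equal; apply map_ext; intros j.
      rewrite <- INR_IZR_INZ; do 2 f_equal; unfold Rdiv; ring. }
  destruct existsb; lra.
Qed.

Lemma run_length_exists s L :
  (10 <= s <= L)%nat -> exists n, (2 * n + 1 <= L /\ n <= s /\ s <= 7 * (n / 2))%nat.
Proof.
  intros Hs; exists (Nat.min s ((L - 1) / 2)).
  pose proof (Nat.div_mod (L - 1) 2); pose proof (Nat.mod_upper_bound (L - 1) 2).
  set (n := Nat.min s _).
  pose proof (Nat.div_mod n 2); pose proof (Nat.mod_upper_bound n 2); lia.
Qed.

Lemma Xi_box_length_bounds L s :
  (10 <= s <= L)%nat -> 1/4 * INR s <= INR (length (Xi_box L s)) <= 3 * INR s.
Proof.
  intros Hs; destruct (run_length_exists s L Hs) as (n & HnL & Hns & Hsn).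
  assert (Hlow : (s <= 4 * length (Xi_box L s))%nat).
  { destruct (Xi_box_split L s n HnL Hns) as (l1 & l2 & ->).
    rewrite !length_app, length_map, length_seq.
    pose proof (Nat.Div0.mul_div_le n 2); lia. }
  assert (Hup : (length (Xi_box L s) <= 3 * s)%nat) by (pose proof (Xi_box_length_le L s); lia).
  apply le_INR in Hlow, Hup; rewrite mult_INR in Hlow, Hup; simpl (INR 3) in Hup; simpl (INR 4) in Hlow.
  lra.
Qed.

Lemma cosV_Xi_box_ge_s L s a : (10 <= s <= L)%nat -> INR s / 16 <= cosV L (Xi_box L s) a.
Proof.
  intros Hs; destruct (run_length_exists s L Hs) as (n & HnL & Hns & Hsn).
  pose proof (cosV_Xi_box_ge L s n a HnL Hns) as Hrun.
  set (x := 2 * PI * IZR a / INR L) in Hrun.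
  pose proof (sumR_seq_prefix_le (fun j => cos (x * INR j) ^ 2) (fun j => pow2_ge_0 _)
                1 (2 * (n / 2)) n (Nat.Div0.mul_div_le n 2)) as Hprefix.
  pose proof (sumR_cos_sq_seq_ge x (n / 2)) as Hpairs.
  apply le_INR in Hsn; rewrite mult_INR in Hsn; simpl (INR 7) in Hsn.
  lra.
Qed.

Lemma Un_cv_const (c : R) : Un_cv (fun _ => c) c.
Proof. intros eps Heps; exists O; intros; unfold Rdist; now rewrite Rminus_diag, Rabs_R0. Qed.

Theorem lemma5p9 :
  exists s0 : nat, forall s : nat -> nat,
    eventually_L (fun L => (s0 <= s L /\ s L <= L)%nat) ->
    det_typically_sparse (fun L => Xi_box L (s L)) s /\
    det_cosine_generic (fun L => Xi_box L (s L)) (fun L => INR (s L) / 16).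
Proof.
  exists 10%nat; intros s [N HN]; split.
  - exists (1/4), 3; split; [lra | split; [lra |]].
    exists N; intros L HL; apply Xi_box_length_bounds, HN, HL.
  - exists (fun _ => 0); split; [apply Un_cv_const |].
    exists N; intros L HL a _; rewrite Rminus_0_r, Rmult_1_r.
    apply cosV_Xi_box_ge_s, HN, HL.
Qed.
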